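(* Consider Janus Quicksort (JQuick), as described in the context, run on $n$ elements with distinct keys distributed over $p$ processes with $n/p$ elements each. A randomly selected input element takes part in more than $20\log_{8/7} p$ distributed levels of recursion before it becomes part of a base case with probability $O(p^{-7})$.
   Context: Janus Quicksort (JQuick) is a recursive distributed-memory sorting algorithm. The input is $n$ elements with pairwise distinct keys, distributed over $p$ processes numbered $0,\dots,p-1$ with exactly $n/p$ elements per process ($n$ a multiple of $p$). The algorithm maintains tasks; a task is a contiguous range of processes together with a contiguous range of the global sorted order of elements that these processes jointly hold, every process holding exactly $n/p$ elements in total, summed over all tasks it belongs to. A process may belong to two tasks at once (a ''janus process''), and it then processes both simultaneously. One distributed level of recursion on a task performs four steps: (1) pivot selection: an element of the task chosen uniformly at random is broadcast to all processes of the task; (2) partitioning: each process splits its elements of the task into small elements (smaller than the pivot) and large elements (at least the pivot); (3) data assignment: using prefix sums and broadcasts, the small elements are assigned to a left group consisting of an initial segment of the task's processes and the large elements to a right group consisting of a final segment, such that every process again holds exactly $n/p$ elements in total; the two groups share at most one process (a janus process); (4) data exchange: elements are sent to their assigned processes. Then the left group recursively sorts the small elements and the right group the large elements. A task covering only one or two processes is a base case; base cases are not split further but sorted in a second phase (locally, or by exchanging data between the two processes, selecting, and sorting locally). Here $\log_{8/7}$ denotes logarithm to base $8/7$. *)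

From Stdlib Require Import Reals Lia List.
Open Scope R_scope.

(* Abstract model of JQuick, tracked through global ranks.
   With m = n/p elements per process, the elements of the whole input, laid out
   in global sorted order, occupy "slots" 0..n-1, slot j living on process j/m.
   The data-assignment step (prefix sums + exactly m elements per process)
   keeps the invariant that the element of global rank j sits in slot j once its
   task has been split; hence a task is determined by its rank range. *)

(* A task: processes pa..pb (inclusive), element ranks lo..hi-1. *)
Record task := Task { pa : nat; pb : nat; lo : nat; hi : nat }.

Definition is_base (T : task) : bool := Nat.leb (pb T - pa T) 1.

(* Splitting T with pivot of global rank k (lo <= k < hi):
   small elements (ranks lo..k-1) go to the left group = initial segment of
   processes pa .. (k-1)/m, large elements (ranks k..hi-1, pivot included) go
   to the right group = final segment k/m .. pb.  The two groups share the
   janus process when (k-1)/m = k/m. *)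
Definition left_task (m : nat) (T : task) (k : nat) : task :=
  Task (pa T) ((k - 1) / m) (lo T) k.
Definition right_task (m : nat) (T : task) (k : nat) : task :=
  Task (k / m) (pb T) k (hi T).

(* reach m t T e = probability that the element of global rank e (belonging to
   task T) takes part in at least t distributed levels of recursion, starting
   from task T.  Each distributed level chooses the pivot uniformly at random
   among the task's elements, independently of earlier choices. *)
Fixpoint reach (m : nat) (t : nat) (T : task) (e : nat) : R :=
  match t with
  | O => 1
  | S t' =>
      if is_base T then 0
      else / INR (hi T - lo T) *
           fold_right Rplus 0
             (map (fun k => if Nat.ltb e k then reach m t' (left_task m T k) e
                            else reach m t' (right_task m T k) e)
                  (seq (lo T) (hi T - lo T)))
  end.

Definition init_task (p n : nat) : task := Task 0 (p - 1) 0 n.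

Definition prob_levels_ge (p n t : nat) : R :=
  / INR n * fold_right Rplus 0
              (map (fun e => reach (n / p) t (init_task p n) e) (seq 0 n)).

(* "more than x levels", x >= 0 real: at least (least integer > x) levels;
   up x is Stdlib's least integer strictly greater than x. *)
Definition prob_levels_gt (p n : nat) (x : R) : R :=
  prob_levels_ge p n (Z.to_nat (up x)).

(* Follow a fixed element e.  A task T stays aligned with the slot layout:
   its processes are exactly those holding the slots lo T .. hi T - 1.  A
   non-base aligned task therefore holds more than m = n/p elements.  With a
   uniformly random pivot the subtask containing e has expected size at most
   7/8 of the task size, so after t + 1 levels the probability that e is still
   in a non-base task is at most (7/8)^t N/m (Markov), i.e. (7/8)^t p at the
   root.  For t + 1 >= 20 log_{8/7} p this is at most (8/7) p^-19. *)

From Stdlib Require Import Reals Lia List ZArith Lra.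
Open Scope R_scope.

Lemma fold_Rplus_map_le {A} (f g : A -> R) (l : list A) :
  (forall a, In a l -> f a <= g a) ->
  fold_right Rplus 0 (map f l) <= fold_right Rplus 0 (map g l).
Proof.
  induction l as [|a l IH]; simpl; intros H; [lra|].
  apply Rplus_le_compat; [apply H | apply IH]; auto.
Qed.

Lemma fold_Rplus_map_scal_INR {A} (c : R) (g : A -> nat) (l : list A) :
  fold_right Rplus 0 (map (fun a => c * INR (g a)) l)
  = c * INR (list_sum (map g l)).
Proof.
  induction l as [|a l IH]; simpl; [ring|].
  rewrite IH, plus_INR. ring.
Qed.

Lemma fold_Rplus_map_le_const {A} (f : A -> R) (l : list A) (c : R) :
  (forall a, In a l -> f a <= c) ->
  fold_right Rplus 0 (map f l) <= INR (length l) * c.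
Proof.
  induction l as [|a l IH]; intros H; cbn [map fold_right length]; [simpl; lra|].
  rewrite S_INR.
  assert (f a <= c) by (apply H; left; reflexivity).
  assert (fold_right Rplus 0 (map f l) <= INR (length l) * c)
    by (apply IH; intros; apply H; right; assumption).
  lra.
Qed.

Definition child_size (lo hi e k : nat) : nat :=
  if Nat.ltb e k then k - lo else hi - k.

Lemma sum_child_size_prefix lo x N L : (x < N)%nat -> (L <= N)%nat ->
  let F := list_sum (map (child_size lo (lo + N) (lo + x)) (seq lo L)) in
  ((L <= x + 1)%nat -> (2 * F + L * L = 2 * L * N + L)%nat) /\
  ((x + 1 <= L)%nat -> (2 * F + 2 * x * (x + 1) + L = 2 * (x + 1) * N + L * L)%nat).
Proof.
  intros Hx. induction L as [|L IH]; intros HL F; subst F; [simpl; lia|].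
  rewrite seq_S, map_app, list_sum_app. simpl.
  destruct IH as [IH_before IH_after]; [lia|].
  set (F := list_sum _) in *. unfold child_size.
  destruct (Nat.ltb (lo + x) (lo + L)) eqn:E.
  - apply Nat.ltb_lt in E.
    replace (lo + L - lo)%nat with L by lia.
    split; intros; [lia|]. specialize (IH_after ltac:(lia)). nia.
  - apply Nat.ltb_ge in E.
    replace (lo + N - (lo + L))%nat with (N - L)%nat by lia.
    specialize (IH_before ltac:(lia)). split; intros; nia.
Qed.

(* The exact sum is (N^2 - N)/2 + (x+1)N - x(x+1) with x = e - lo, which is
   maximal at x = (N-1)/2 where it equals (3N^2 + 1)/4. *)
Lemma sum_child_size_le lo hi e : (lo <= e < hi)%nat -> (2 <= hi - lo)%nat ->
  (8 * list_sum (map (child_size lo hi e) (seq lo (hi - lo)))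
   <= 7 * (hi - lo) * (hi - lo))%nat.
Proof.
  intros He HN.
  remember (e - lo)%nat as x. remember (hi - lo)%nat as N.
  assert (e = lo + x)%nat by lia. assert (hi = lo + N)%nat by lia. subst e hi.
  replace (lo + N - lo)%nat with N by lia.
  destruct (sum_child_size_prefix lo x N N ltac:(lia) ltac:(lia)) as [_ Hsum].
  specialize (Hsum ltac:(lia)).
  set (F := list_sum _) in *. clearbody F. clear HeqN Heqx.
  pose proof (Z.square_nonneg (2 * Z.of_nat x + 1 - Z.of_nat N)).
  nia.
Qed.

Definition aligned (m : nat) (T : task) : Prop :=
  pa T = (lo T / m)%nat /\ pb T = ((hi T - 1) / m)%nat.

Lemma aligned_left_task m T k : aligned m T -> aligned m (left_task m T k).
Proof. intros [Ha _]. split; reflexivity || exact Ha. Qed.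

Lemma aligned_right_task m T k : aligned m T -> aligned m (right_task m T k).
Proof. intros [_ Hb]. split; reflexivity || exact Hb. Qed.

Lemma init_task_aligned p m : (0 < p)%nat -> (0 < m)%nat ->
  aligned m (init_task p (m * p)).
Proof.
  intros Hp Hm. split; simpl.
  - symmetry. apply Nat.Div0.div_0_l.
  - apply (Nat.div_unique _ _ _ (m - 1)); nia.
Qed.

Lemma aligned_nonbase_size m T : (0 < m)%nat -> aligned m T ->
  is_base T = false -> (m < hi T - lo T)%nat.
Proof.
  intros Hm [Ha Hb] Hbase. unfold is_base in Hbase. apply Nat.leb_gt in Hbase.
  rewrite Ha, Hb in Hbase.
  pose proof (Nat.div_mod (lo T) m ltac:(lia)).
  pose proof (Nat.mod_upper_bound (lo T) m ltac:(lia)).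
  pose proof (Nat.div_mod (hi T - 1) m ltac:(lia)).
  pose proof (Nat.mod_upper_bound (hi T - 1) m ltac:(lia)).
  nia.
Qed.

Lemma mean_le_child_size lo hi e (f : nat -> R) (c : R) :
  (lo <= e < hi)%nat -> (2 <= hi - lo)%nat -> 0 <= c ->
  (forall k, (lo <= k < hi)%nat -> f k <= c * INR (child_size lo hi e k)) ->
  / INR (hi - lo) * fold_right Rplus 0 (map f (seq lo (hi - lo)))
  <= 7/8 * c * INR (hi - lo).
Proof.
  intros He HN Hc Hf.
  assert (HNR : 0 < INR (hi - lo)) by (apply lt_0_INR; lia).
  eapply Rle_trans.
  { apply Rmult_le_compat_l; [left; apply Rinv_0_lt_compat; lra|].
    apply (fold_Rplus_map_le _ (fun k => c * INR (child_size lo hi e k))).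
    intros k Hk. apply in_seq in Hk. apply Hf. lia. }
  rewrite fold_Rplus_map_scal_INR.
  pose proof (sum_child_size_le lo hi e He HN) as Hsum.
  apply le_INR in Hsum. rewrite !mult_INR in Hsum. simpl in Hsum.
  set (N := INR (hi - lo)) in *. set (S := INR (list_sum _)) in *.
  apply Rle_trans with (/ N * (c * (7/8 * (N * N)))).
  - apply Rmult_le_compat_l; [left; apply Rinv_0_lt_compat; lra|].
    apply Rmult_le_compat_l; lra.
  - right. field. lra.
Qed.

Lemma reach_aligned_le m t T e : (0 < m)%nat -> aligned m T ->
  (lo T <= e < hi T)%nat ->
  reach m (S t) T e <= (7/8) ^ t * (INR (hi T - lo T) / INR m).
Proof.
  intros Hm. assert (HmR : 0 < INR m) by (apply lt_0_INR; lia).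
  induction t as [|t IH] in T, e |- *; intros HT He; cbn [reach];
    destruct (is_base T) eqn:Hbase;
    try (apply Rmult_le_pos; [apply pow_le; lra|];
         apply Rmult_le_pos; [apply pos_INR | left; apply Rinv_0_lt_compat; lra]).
  all: pose proof (aligned_nonbase_size m T Hm HT Hbase) as HN.
  - eapply Rle_trans.
    { apply Rmult_le_compat_l; [left; apply Rinv_0_lt_compat, lt_0_INR; lia|].
      apply (fold_Rplus_map_le_const _ _ 1). intros k _. destruct (Nat.ltb e k); simpl; lra. }
    rewrite length_seq, Rmult_1_r, Rinv_l by (apply not_0_INR; lia).
    apply lt_INR in HN. simpl. apply (Rmult_le_reg_r (INR m)); [lra|].
    field_simplify; lra.
  - eapply Rle_trans.
    { apply (mean_le_child_size (lo T) (hi T) e _ ((7/8) ^ t / INR m)); [exact He | lia | |].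
      - apply Rmult_le_pos; [apply pow_le | left; apply Rinv_0_lt_compat]; lra.
      - intros k Hk. unfold child_size.
        destruct (Nat.ltb e k) eqn:E; [apply Nat.ltb_lt in E | apply Nat.ltb_ge in E].
        + eapply Rle_trans; [apply IH; [apply aligned_left_task; exact HT | simpl; lia]|].
          right. simpl. unfold Rdiv. ring.
        + eapply Rle_trans; [apply IH; [apply aligned_right_task; exact HT | simpl; lia]|].
          right. simpl. unfold Rdiv. ring. }
    right. simpl. unfold Rdiv. ring.
Qed.

Lemma prob_levels_ge_le p m t : (0 < p)%nat -> (0 < m)%nat ->
  prob_levels_ge p (m * p) (S t) <= (7/8) ^ t * INR p.
Proof.
  intros Hp Hm. unfold prob_levels_ge.
  rewrite Nat.div_mul by lia.
  assert (HnR : 0 < INR (m * p)) by (apply lt_0_INR; lia).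
  eapply Rle_trans.
  { apply Rmult_le_compat_l; [left; apply Rinv_0_lt_compat; lra|].
    apply fold_Rplus_map_le_const. intros e He. apply in_seq in He.
    apply reach_aligned_le; [lia | apply init_task_aligned; lia | simpl; lia]. }
  rewrite length_seq, <- Rmult_assoc, Rinv_l, Rmult_1_l by lra.
  simpl. rewrite Nat.sub_0_r, mult_INR. right. field.
  apply not_0_INR. lia.
Qed.

Lemma pow_le_pow_of_ln_ratio (a x : R) (k t : nat) : 1 < a -> 0 < x ->
  INR k * (ln x / ln a) <= INR t -> x ^ k <= a ^ t.
Proof.
  intros Ha Hx Hkt.
  assert (Hla : 0 < ln a) by (rewrite <- ln_1; apply ln_increasing; lra).
  destruct (Rle_lt_dec (x ^ k) (a ^ t)) as [|Hlt]; [assumption|].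
  apply ln_increasing in Hlt; [|apply pow_lt; lra].
  rewrite !ln_pow in Hlt by lra.
  apply (Rmult_le_compat_r (ln a)) in Hkt; [|lra].
  replace (INR k * (ln x / ln a) * ln a) with (INR k * ln x) in Hkt by (field; lra).
  lra.
Qed.

Lemma up_to_nat_succ (x : R) : 0 < x ->
  exists t, Z.to_nat (up x) = S t /\ x <= INR (S t).
Proof.
  intros Hx. destruct (archimed x) as [Hup _].
  assert (Hpos : (0 < up x)%Z) by (apply lt_IZR; lra).
  destruct (Z.to_nat (up x)) as [|t] eqn:Et; [lia|].
  exists t. split; [reflexivity|].
  rewrite <- Et, INR_IZR_INZ, Z2Nat.id by lia. lra.
Qed.

Lemma decay_le_inv_pow7 (x : R) (t : nat) : 1 < x ->
  x ^ 20 <= (8/7) ^ S t -> (7/8) ^ t * x <= 2 / x ^ 7.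
Proof.
  intros Hx Hdecay.
  assert (H7 : 0 < x ^ 7) by (apply pow_lt; lra).
  assert (H8 : x ^ 8 <= x ^ 20) by (apply Rle_pow; lia || lra).
  assert (Hq : 0 < (8/7) ^ S t) by (apply pow_lt; lra).
  replace ((7/8) ^ t) with (8/7 / (8/7) ^ S t)
    by (replace (7/8) with (/ (8/7)) by field; rewrite pow_inv; simpl; field;
        apply pow_nonzero; lra).
  apply (Rmult_le_reg_r ((8/7) ^ S t * x ^ 7)); [apply Rmult_lt_0_compat; lra|].
  replace (8/7 / (8/7) ^ S t * x * ((8/7) ^ S t * x ^ 7)) with (8/7 * x ^ 8)
    by (field; lra).
  replace (2 / x ^ 7 * ((8/7) ^ S t * x ^ 7)) with (2 * (8/7) ^ S t) by (field; lra).
  lra.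
Qed.

Theorem lemma1 :
  exists (C : R) (p0 : nat), forall p n : nat,
    (p0 <= p)%nat -> (0 < n)%nat -> Nat.divide p n ->
    prob_levels_gt p n (20 * (ln (INR p) / ln (8 / 7))) <= C / INR p ^ 7.
Proof.
  exists 2, 2%nat. intros p n Hp Hn [m ->].
  assert (HpR : 1 < INR p) by (apply lt_1_INR; lia).
  assert (Hl87 : 0 < ln (8/7)) by (rewrite <- ln_1; apply ln_increasing; lra).
  assert (Hlp : 0 < ln (INR p)) by (rewrite <- ln_1; apply ln_increasing; lra).
  set (x := 20 * (ln (INR p) / ln (8 / 7))).
  destruct (up_to_nat_succ x) as [t [Ht Hxt]].
  { apply Rmult_lt_0_compat; [lra | apply Rdiv_lt_0_compat; lra]. }
  unfold prob_levels_gt. rewrite Ht.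
  eapply Rle_trans; [apply prob_levels_ge_le; lia|].
  apply decay_le_inv_pow7; [lra|].
  apply pow_le_pow_of_ln_ratio; [lra | lra |].
  rewrite INR_IZR_INZ. exact Hxt.
Qed.
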